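(* Let $i\in[n]$, let $S^\ast\subseteq[n]\setminus\{i\}$, and let $\mathcal{G}$ be a DAG on $[n]$ such that the induced subgraph $\mathcal{G}|_{S^\ast}$ has no edges. Let $\mathcal{H}$ be the graph identical to $\mathcal{G}$ but with all the edges $j\to i$ for $j\in S^\ast$. If $\mathcal{H}$ is a DAG, then $\operatorname{conv}(c_\mathcal{G},c_\mathcal{H})$ is an edge of $\mathrm{CIM}_n$.
   Context: For a directed acyclic graph (DAG) $\mathcal{G}$ on vertex set $[n]=\{1,\dots,n\}$, the characteristic imset $c_\mathcal{G}$ is the 0/1-vector indexed by the subsets $S\subseteq[n]$ with $|S|\geq 2$, with $c_\mathcal{G}(S)=1$ if there exists $i\in S$ such that $S\subseteq \mathrm{pa}_\mathcal{G}(i)\cup\{i\}$ (where $\mathrm{pa}_\mathcal{G}(i)$ is the set of parents of $i$), and $c_\mathcal{G}(S)=0$ otherwise. The characteristic imset polytope is $\mathrm{CIM}_n=\operatorname{conv}(c_\mathcal{G}\colon \mathcal{G}\text{ a DAG on }[n])$. *)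

From HB Require Import structures.
From mathcomp Require Import all_boot all_order all_algebra.
Set Implicit Arguments. Unset Strict Implicit. Unset Printing Implicit Defensive.
Import Order.TTheory GRing.Theory Num.Theory.
Local Open Scope ring_scope.

(* A directed graph on [n] = 'I_n, given by its set of arcs (j,k) meaning j -> k. *)
Definition digraph (n : nat) := {set 'I_n * 'I_n}.

Definition arc_rel n (G : digraph n) : rel 'I_n := fun a b => (a, b) \in G.

Definition is_dag n (G : digraph n) : bool :=
  [forall x : 'I_n, forall y : 'I_n, ((x, y) \in G) ==> ~~ connect (arc_rel G) y x].

Definition pa n (G : digraph n) (i : 'I_n) : {set 'I_n} := [set j | (j, i) \in G].

(* Coordinates of the characteristic imset: subsets S of [n] with |S| >= 2. *)
Definition coord (n : nat) := {S : {set 'I_n} | 1 < #|S|}%N.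

Definition point (R : Type) (n : nat) := coord n -> R.

Definition cim (R : realFieldType) n (G : digraph n) : point R n :=
  fun S => if [exists i in val S, val S \subset pa G i :|: [set i]] then 1 else 0.

Definition in_conv (R : realFieldType) n (I : finType) (A : pred I) (f : I -> point R n)
  (x : point R n) : Prop :=
  exists l : I -> R, (forall k, 0 <= l k) /\ (forall k, ~~ A k -> l k = 0) /\
    \sum_k l k = 1 /\ forall S, x S = \sum_k l k * f k S.

Definition CIM (R : realFieldType) n : point R n -> Prop :=
  in_conv (fun G : digraph n => is_dag G) (@cim R n).

Definition segment (R : realFieldType) n (a b : point R n) : point R n -> Prop :=
  in_conv (I := bool) predT (fun t => if t then a else b).

Definition dot (R : realFieldType) n (w x : point R n) : R := \sum_S w S * x S.

Definition is_face (R : realFieldType) n (P F : point R n -> Prop) : Prop :=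
  exists (w : point R n) (c : R), (forall x, P x -> dot w x <= c) /\
    (forall x, F x <-> (P x /\ dot w x = c)).

Definition is_edge (R : realFieldType) n (P : point R n -> Prop) (a b : point R n) : Prop :=
  (exists S, a S != b S) /\ is_face P (segment a b).

Definition add_parents n (G : digraph n) (i : 'I_n) (S : {set 'I_n}) : digraph n :=
  G :|: [set (j, i) | j in S].

From Pilot Require Import Defs.
From HB Require Import structures.
From mathcomp Require Import all_boot all_order all_algebra.
From mathcomp Require Import lra.
Import Order.TTheory GRing.Theory Num.Theory.
Set Implicit Arguments. Unset Strict Implicit. Unset Printing Implicit Defensive.
Local Open Scope ring_scope.

(* Write P = pa_G(i), Z = {i} ∪ P ∪ S* and call diffsets the S with i ∈ S ⊆ Z
   meeting S* \ P: c_G and c_H agree off the diffsets, and on them c_G = 0, c_H = 1.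
   We build a linear functional maximised over the DAG imsets exactly at c_G and c_H.
   A heavily weighted part forces a maximiser c_K to satisfy c_G <= c_K <= c_H, so on
   pairs K has all adjacencies of G and only adjacencies of H.  For such a DAG K,
   acyclicity shows that c_K is preserved along the moves S -> S ∪ {x} (x adjacent in G
   to all of S \ {i}) and S ∪ {x} -> S (x not adjacent to some vertex of S \ {i})
   between diffsets, and every diffset reaches Z by such moves.  The second part of
   the functional is the sum of c_K(S) - c_K(T) over the moves S -> T: it is <= 0 and
   vanishes only if c_K is constant on the diffsets, i.e. c_K is c_G or c_H. *)

Section ConvexHullEdge.
Variables (R : realFieldType) (n : nat).

Lemma dot_comb (I : finType) (f : I -> point R n) (w x : point R n) (l : I -> R) :
  (forall S, x S = \sum_k l k * f k S) -> dot w x = \sum_k l k * dot w (f k).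
Proof.
move=> xE; rewrite /dot; under eq_bigr do rewrite xE mulr_sumr.
rewrite exchange_big; apply: eq_bigr => k _; rewrite mulr_sumr.
by apply: eq_bigr => S _; rewrite mulrCA.
Qed.

Lemma sum_delta (T : finType) (j : T) (a : R) (F : T -> R) :
  \sum_k (if k == j then a else 0) * F k = a * F j.
Proof. by rewrite (bigD1 j) //= eqxx big1 ?addr0 // => k /negbTE ->; rewrite mul0r. Qed.

Variables (I : finType) (A : pred I) (f : I -> point R n) (w : point R n) (c : R).
Hypothesis dot_vertex_le : forall k, A k -> dot w (f k) <= c.

Lemma in_conv_dot_le x : in_conv A f x -> dot w x <= c.
Proof.
move=> [l [l_ge0 [l_out [l_sum xE]]]].
rewrite (dot_comb _ xE) -[c]mul1r -l_sum mulr_suml; apply: ler_sum => k _.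
case: (boolP (A k)) => [Ak | /l_out->]; last by rewrite !mul0r.
by apply: ler_wpM2l => //; apply: dot_vertex_le.
Qed.

Lemma in_conv_dot_eq_support (x : point R n) (l : I -> R) :
  (forall k, 0 <= l k) -> (forall k, ~~ A k -> l k = 0) -> \sum_k l k = 1 ->
  (forall S, x S = \sum_k l k * f k S) -> dot w x = c ->
  forall k, l k = 0 \/ (A k /\ dot w (f k) = c).
Proof.
move=> l_ge0 l_out l_sum xE xc.
have slack_ge0 k : 0 <= l k * (c - dot w (f k)).
  case: (boolP (A k)) => [Ak | /l_out->]; last by rewrite mul0r.
  by rewrite mulr_ge0 // subr_ge0 dot_vertex_le.
have slack0 : \sum_k l k * (c - dot w (f k)) = 0.
  under eq_bigr do rewrite mulrBr.
  by rewrite sumrB -mulr_suml l_sum mul1r -(dot_comb _ xE) xc subrr.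
move=> k; have := @psumr_eq0P _ _ predT _ (fun k _ => slack_ge0 k) slack0 k isT.
move/eqP; rewrite mulf_eq0 subr_eq0 => /orP[/eqP lk0 | /eqP ck]; first by left.
case: (boolP (A k)) => [Ak | /l_out]; by [right | left].
Qed.

Variables (ka kb : I).
Hypotheses (Aka : A ka) (Akb : A kb).
Hypotheses (dot_ka : dot w (f ka) = c) (dot_kb : dot w (f kb) = c).
Hypothesis maximizers :
  forall k, A k -> dot w (f k) = c -> f k =1 f ka \/ f k =1 f kb.

Lemma segment_in_conv x : segment (f ka) (f kb) x -> in_conv A f x.
Proof.
move=> [l [l_ge0 [_ [l_sum xE]]]]; rewrite big_bool /= in l_sum.
pose m k := (if k == ka then l true else 0) + (if k == kb then l false else 0).
exists m; split; first by move=> k; rewrite addr_ge0 //; case: eqP.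
split; first by move=> k notA; rewrite /m !ifN ?addr0 //; apply: contraNneq notA => ->.
split; first by rewrite big_split /= -!big_mkcond /= !big_pred1_eq.
move=> S; rewrite xE big_bool /=; under eq_bigr do rewrite mulrDl.
by rewrite big_split /= !sum_delta.
Qed.

Lemma segment_dot x : segment (f ka) (f kb) x -> dot w x = c.
Proof.
move=> [l [_ [_ [l_sum xE]]]]; rewrite big_bool /= in l_sum.
by rewrite (dot_comb _ xE) big_bool /= dot_ka dot_kb -mulrDl l_sum mul1r.
Qed.

Lemma in_conv_dot_eq_segment x :
  in_conv A f x -> dot w x = c -> segment (f ka) (f kb) x.
Proof.
move=> [l [l_ge0 [l_out [l_sum xE]]]] xc.
have supp := in_conv_dot_eq_support l_ge0 l_out l_sum xE xc.
pose near_a k := [forall S, f k S == f ka S].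
exists (fun t => if t then \sum_(k | near_a k) l k else \sum_(k | ~~ near_a k) l k).
split; first by case; apply: sumr_ge0.
split; first by [].
split; first by rewrite big_bool /= -l_sum [in RHS](bigID near_a).
move=> S; rewrite big_bool /= xE (bigID near_a) /= !mulr_suml; congr (_ + _).
  by apply: eq_bigr => k /forallP /(_ S) /eqP ->.
apply: eq_bigr => k not_a; case: (supp k) => [-> | [Ak kc]]; first by rewrite !mul0r.
case: (maximizers Ak kc) => [ka_eq | -> //].
by move: not_a => /forallPn[S']; rewrite ka_eq eqxx.
Qed.

Lemma in_conv_edge : (exists S, f ka S != f kb S) -> is_edge (in_conv A f) (f ka) (f kb).
Proof.
move=> differ; split => //; exists w, c; split; first exact: in_conv_dot_le.
move=> x; split => [seg | [conv xc]]; last exact: in_conv_dot_eq_segment.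
by split; [exact: segment_in_conv | exact: segment_dot].
Qed.

End ConvexHullEdge.

Section Families.
Variable n : nat.
Implicit Types (K : digraph n) (S : {set 'I_n}) (a b : 'I_n).

Definition in_family K S : bool := [exists k in S, S \subset pa K k :|: [set k]].

Definition adj K a b : bool := ((a, b) \in K) || ((b, a) \in K).

Lemma cimE (R : realFieldType) K (S : Defs.coord n) :
  cim R K S = if in_family K (val S) then 1 else 0.
Proof. by []. Qed.

Lemma in_pa K a b : (a \in pa K b) = ((a, b) \in K).
Proof. by rewrite inE. Qed.

Lemma in_familyP K S :
  reflect (exists2 k, k \in S & forall y, y \in S -> y = k \/ (y, k) \in K) (in_family K S).
Proof.
apply: (iffP existsP) => [[k /andP[kS /subsetP sub]] | [k kS H]].
  exists k => // y /sub; rewrite !inE => /orP[|/eqP]; by auto.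
exists k; rewrite kS; apply/subsetP => y /H; rewrite !inE.
by case=> [-> | ->]; rewrite ?eqxx ?orbT.
Qed.

Lemma in_family_subgraph K1 K2 S : K1 \subset K2 -> in_family K1 S -> in_family K2 S.
Proof.
move=> /subsetP sub /in_familyP[k kS H]; apply/in_familyP; exists k => // y /H.
by case=> [|/sub]; auto.
Qed.

Lemma in_family2 K a b : a != b -> in_family K [set a; b] = adj K a b.
Proof.
move=> ab; apply/in_familyP/idP => [[k] | /orP[] e].
- rewrite !inE /adj => /orP[]/eqP-> H.
    have [/eqP | ->] := H b (set22 a b); last by rewrite orbT.
    by rewrite eq_sym (negbTE ab).
  by have [/eqP | ->] := H a (set21 a b); first by rewrite (negbTE ab).
- by exists b; rewrite ?inE ?eqxx ?orbT // => y; rewrite !inE => /orP[]/eqP->; auto.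
- by exists a; rewrite ?inE ?eqxx // => y; rewrite !inE => /orP[]/eqP->; auto.
Qed.

Lemma card_pair_gt1 a b : a != b -> (1 < #|[set a; b]|)%N.
Proof. by rewrite cards2 => ->. Qed.

Definition pair_coord a b (ab : a != b) : Defs.coord n := exist _ [set a; b] (card_pair_gt1 ab).

Lemma dag_arc_not_connect K a b : is_dag K -> (a, b) \in K -> ~~ connect (arc_rel K) b a.
Proof. by move=> /forallP/(_ a)/forallP/(_ b)/implyP. Qed.

Lemma dag_no_loop K a : is_dag K -> (a, a) \notin K.
Proof. by move=> dK; apply/negP => /(dag_arc_not_connect dK); rewrite connect0. Qed.

Lemma dag_no_2cycle K a b : is_dag K -> (a, b) \in K -> (b, a) \notin K.
Proof. by move=> dK ab; apply/negP => ba; move: (dag_arc_not_connect dK ab); rewrite connect1. Qed.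

Lemma dag_no_3cycle K a b c : is_dag K -> (a, b) \in K -> (b, c) \in K -> (c, a) \notin K.
Proof.
move=> dK ab bc; apply/negP => /(dag_arc_not_connect dK).
by rewrite (connect_trans (connect1 (ab : arc_rel K a b)) (connect1 (bc : arc_rel K b c))).
Qed.

Lemma dag_adj_neq K a b : is_dag K -> adj K a b -> a != b.
Proof. by move=> dK; apply: contraTneq => ->; rewrite /adj orbb dag_no_loop. Qed.

End Families.

Section AddParents.
Variables (n : nat) (i : 'I_n) (Sst : {set 'I_n}) (G : digraph n).
Hypothesis i_notin_Sst : i \notin Sst.
Hypothesis Sst_independent : forall j k, j \in Sst -> k \in Sst -> (j, k) \notin G.
Hypothesis dag_H : is_dag (add_parents G i Sst).

Implicit Types (K : digraph n) (S T : {set 'I_n}) (a b x y : 'I_n).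

Local Notation H := (add_parents G i Sst).
Local Notation Z := (i |: (pa G i :|: Sst)).

Definition diffset S : bool :=
  [&& i \in S, S \subset Z & [exists j in S, j \in Sst :\: pa G i]].

Lemma arc_add_parents a b : ((a, b) \in H) = ((a, b) \in G) || ((b == i) && (a \in Sst)).
Proof.
rewrite inE; congr (_ || _).
apply/imsetP/andP => [[j jS [-> ->]] | [/eqP-> aS]]; first by rewrite eqxx.
by exists a.
Qed.

Lemma subgraph_add_parents : G \subset H.
Proof. exact: subsetUl. Qed.

Lemma neq_of_Sst j : j \in Sst -> j != i.
Proof. by apply: contraTneq => ->. Qed.

Lemma adj_add_parents a b : a != i -> b != i -> adj H a b = adj G a b.
Proof. by move=> ai bi; rewrite /adj !arc_add_parents (negbTE ai) (negbTE bi) !orbF. Qed.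

Lemma diffset_in_family_H S : diffset S -> in_family H S.
Proof.
case/and3P=> iS /subsetP SZ _; apply/in_familyP; exists i => // y /SZ.
rewrite !in_setU1 in_setU in_pa => /or3P[/eqP-> | yP | yS]; first by left.
  by right; rewrite arc_add_parents yP.
by right; rewrite arc_add_parents eqxx yS orbT.
Qed.

Lemma diffset_notin_family_G S : diffset S -> ~~ in_family G S.
Proof.
case/and3P=> iS /subsetP SZ /existsP[j /andP[jS]].
rewrite in_setD in_pa => /andP[jP jSst]; apply/negP => /in_familyP[k kS sink_k].
have [ki | ki] := eqVneq k i.
  subst k; by have [/eqP | ] := sink_k j jS; [rewrite (negbTE (neq_of_Sst jSst)) | apply/negP].
have [/eqP | ik] := sink_k i iS; first by rewrite eq_sym (negbTE ki).
have /negP := dag_no_2cycle dag_H (subsetP subgraph_add_parents _ ik); apply.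
move: (SZ k kS); rewrite !in_setU1 in_setU in_pa (negbTE ki) arc_add_parents eqxx /=.
by case/orP=> ->; rewrite ?orbT.
Qed.

Lemma in_family_H_notdiffset S : ~~ diffset S -> in_family H S -> in_family G S.
Proof.
move=> notD /in_familyP[k kS sink_k]; apply/in_familyP; exists k => // y yS.
have [ki | ki] := eqVneq k i; last first.
  case: (sink_k y yS) => [-> | ]; first by left.
  by rewrite arc_add_parents (negbTE ki) orbF; right.
subst k; have [-> | yi] := eqVneq y i; first by left.
right; apply: contraNT notD => yG; apply/and3P; split => //.
  apply/subsetP => z /sink_k [-> | ]; first exact: setU11.
  rewrite arc_add_parents eqxx /= !in_setU1 in_setU in_pa.
  by case/orP=> ->; rewrite ?orbT.
apply/existsP; exists y; rewrite yS in_setD in_pa yG /=.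
case: (sink_k y yS) => [/eqP | ]; first by rewrite (negbTE yi).
by rewrite arc_add_parents eqxx (negbTE yG).
Qed.

Lemma diffset_card S : diffset S -> (1 < #|S|)%N.
Proof.
case/and3P=> iS _ /existsP[j /andP[jS]]; rewrite in_setD => /andP[_ /neq_of_Sst ji].
rewrite (cardsD1 i) iS ltnS card_gt0; apply/set0Pn; exists j.
by rewrite !inE ji.
Qed.

Lemma in_family_G_H S : in_family G S -> in_family H S.
Proof. exact: in_family_subgraph subgraph_add_parents. Qed.

Lemma adj_G_H a b : adj G a b -> adj H a b.
Proof. by case/orP=> e; rewrite /adj !arc_add_parents e ?orbT. Qed.

Definition misplaced K S : bool :=
  (in_family G S && ~~ in_family K S) || (in_family K S && ~~ in_family H S).

Lemma not_misplaced_G S : ~~ misplaced G S.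
Proof. by rewrite /misplaced andbN; case: (boolP (in_family G S)) => // /in_family_G_H ->. Qed.

Lemma not_misplaced_H S : ~~ misplaced H S.
Proof. by rewrite /misplaced andbN orbF; case: (boolP (in_family G S)) => // /in_family_G_H ->. Qed.

Definition step S T : bool :=
  [&& diffset S, diffset T &
    [exists x, [&& x \notin S, T == x |: S & [forall y in S :\ i, adj G x y]]] ||
    [exists x, [&& x \notin T, S == x |: T & ~~ [forall y in T :\ i, adj G x y]]]].

Lemma step_diffsets S T : step S T -> diffset S && diffset T.
Proof. by case/and3P=> -> ->. Qed.

Definition sandwiched K : Prop := forall S : Defs.coord n, ~~ misplaced K (val S).

Section Sandwiched.
Variable K : digraph n.
Hypothesis dag_K : is_dag K.
Hypothesis K_sandwiched : sandwiched K.

Lemma adj_G_K a b : adj G a b -> adj K a b.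
Proof.
move=> e; have ab := dag_adj_neq dag_H (adj_G_H e).
move: (K_sandwiched (pair_coord ab)).
by rewrite /misplaced /= !in_family2 // e /= => /norP[/negPn].
Qed.

Lemma adj_K_H a b : a != b -> adj K a b -> adj H a b.
Proof.
move=> ab e; move: (K_sandwiched (pair_coord ab)).
by rewrite /misplaced /= !in_family2 // e /= orbC => /norP[/negPn].
Qed.

Lemma in_family_step_up S x :
  diffset S -> diffset (x |: S) -> x \notin S -> [forall y in S :\ i, adj G x y] ->
  in_family K S -> in_family K (x |: S).
Proof.
case/and3P=> iS _ /existsP[j /andP[jS]]; rewrite in_setD => /andP[_ jSst].
case/and3P=> _ /subsetP xSZ _ xS /forall_inP adj_x /in_familyP[k kS sink_k].
have xi : x != i by apply: contraNneq xS => ->.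
have ji := neq_of_Sst jSst.
have xP : (x, i) \in G.
  move: (xSZ x (setU11 _ _)); rewrite !in_setU1 in_setU in_pa (negbTE xi) /=.
  case/orP=> [// | xSst]; move: (adj_x j); rewrite !inE ji jS => /(_ isT).
  by rewrite /adj (negbTE (Sst_independent xSst jSst)) (negbTE (Sst_independent jSst xSst)).
have adjK_x y : y \in S -> adj K x y.
  move=> yS; apply: adj_G_K; have [-> | yi] := eqVneq y i; first by rewrite /adj xP.
  by apply: adj_x; rewrite !inE yi.
apply/in_familyP; case xk: ((x, k) \in K).
  exists k; first by rewrite in_setU1 kS orbT.
  by move=> y; rewrite in_setU1 => /orP[/eqP-> | /sink_k]; auto.
have kx : (k, x) \in K by move: (adjK_x k kS); rewrite /adj xk.
exists x; first exact: setU11.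
move=> y; rewrite in_setU1 => /orP[/eqP-> | yS]; first by left.
have [-> | yk] := eqVneq y k; [by right | right].
have [/eqP | yk'] := sink_k y yS; first by rewrite (negbTE yk).
(* x -> y would close the cycle x -> y -> k -> x *)
move: (adjK_x y yS); rewrite /adj => /orP[xy | //].
by move: (dag_no_3cycle dag_K xy yk'); rewrite kx.
Qed.

Lemma in_family_step_down T x :
  diffset T -> x \notin T -> ~~ [forall y in T :\ i, adj G x y] ->
  in_family K (x |: T) -> in_family K T.
Proof.
case/and3P=> iT _ _ xT /forall_inPn[y0]; rewrite in_setD1 => /andP[y0i y0T] nadj.
have xi : x != i by apply: contraNneq xT => ->.
move=> /in_familyP[k kS sink_k]; apply/in_familyP.
have [kx | kx] := eqVneq k x.
  subst k; have y0x : y0 != x by apply: contraNneq xT => <-.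
  have [/eqP | e] := sink_k y0 (setU1r _ y0T); first by rewrite (negbTE y0x).
  have : adj H x y0 by apply: adj_K_H; rewrite 1?eq_sym // /adj e orbT.
  by rewrite adj_add_parents // (negbTE nadj).
exists k; first by move: kS; rewrite in_setU1 (negbTE kx).
by move=> y yT; apply: sink_k; rewrite in_setU1 yT orbT.
Qed.

Lemma in_family_step S T : step S T -> in_family K S -> in_family K T.
Proof.
case/and3P=> DS DT /orP[]/existsP[x /and3P[xS /eqP eq_ST adj_x]]; subst.
  exact: in_family_step_up.
exact: in_family_step_down.
Qed.

End Sandwiched.

Lemma diffset_setU1 S x : diffset S -> x \in Z -> diffset (x |: S).
Proof.
case/and3P=> iS SZ /existsP[j /andP[jS jN]] xZ; apply/and3P; split.
- exact: setU1r.
- by rewrite subUset sub1set xZ.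
- by apply/existsP; exists j; rewrite setU1r.
Qed.

Lemma step_invariant_const (p : pred {set 'I_n}) :
  (forall S T, step S T -> p S = p T) -> forall S, diffset S -> p S = p Z.
Proof.
move=> p_step S; move defm: #|Z :\: S| => m.
elim: m S defm => [|m IH] S defm DS.
  have [_ SZ _] := and3P DS.
  suff -> : S = Z by [].
  by apply/eqP; rewrite eqEsubset SZ -setD_eq0 -cards_eq0 defm.
have /set0Pn[x] : Z :\: S != set0 by rewrite -card_gt0 defm.
rewrite in_setD => /andP[xS xZ].
have DxS := diffset_setU1 DS xZ.
rewrite -(IH (x |: S)) //; last first.
  have -> : Z :\: (x |: S) = (Z :\: S) :\ x by rewrite setDDl (setUC S).
  by move: defm; rewrite (cardsD1 x) in_setD xS xZ => -[].
have [adj_x | nadj_x] := boolP [forall y in S :\ i, adj G x y];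
  [apply: p_step | symmetry; apply: p_step]; rewrite /step DS DxS /=;
  apply/orP; [left | right]; apply/existsP; exists x; by rewrite xS eqxx.
Qed.

Lemma sandwiched_step_invariant_cases K :
  sandwiched K ->
  (forall S T, step S T -> in_family K S = in_family K T) ->
  (forall S : Defs.coord n, in_family K (val S) = in_family G (val S)) \/
  (forall S : Defs.coord n, in_family K (val S) = in_family H (val S)).
Proof.
move=> K_sandwiched K_step.
have on_diffset S : diffset S -> in_family K S = in_family K Z.
  exact: step_invariant_const.
have off_diffset (S : Defs.coord n) : ~~ diffset (val S) ->
    in_family K (val S) = in_family G (val S) /\ in_family H (val S) = in_family G (val S).
  move=> notD; move: (K_sandwiched S); rewrite /misplaced.
  have /implyP := @in_family_G_H (val S); have /implyP := in_family_H_notdiffset notD.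
  by case: in_family; case: in_family; case: in_family.
case KZ: (in_family K Z); [right | left] => S;
  have [DS | /off_diffset[-> //]] := boolP (diffset (val S)).
- by rewrite on_diffset // KZ diffset_in_family_H.
- by rewrite on_diffset // KZ (negbTE (diffset_notin_family_G DS)).
Qed.

Section Functional.
Variable R : realFieldType.
Implicit Types v : point R n.

Definition steps : pred (Defs.coord n * Defs.coord n) := fun p => step (val p.1) (val p.2).

Definition step_descent v : R := \sum_(p | steps p) (v p.1 - v p.2).

Definition nsteps : R := \sum_(p | steps p) 1.

Local Notation M := (nsteps + 1).

Definition level (S : Defs.coord n) : R :=
  if in_family G (val S) then 1 else if in_family H (val S) then 0 else -1.

(* [M] exceeds every [step_descent], so the [level] part dominates. *)
Definition wt : point R n := fun S : Defs.coord n =>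
  M * level S + \sum_(p | steps p) ((if S == p.1 then 1 else 0) - (if S == p.2 then 1 else 0)).

Definition wt_max : R := M * \sum_(S : Defs.coord n) (if in_family G (val S) then 1 else 0).

Lemma dot_wt v : dot wt v = M * \sum_(S : Defs.coord n) level S * v S + step_descent v.
Proof.
rewrite /dot /wt; under eq_bigr do rewrite mulrDl -mulrA.
rewrite big_split /= -mulr_sumr; congr (_ + _).
under eq_bigr do rewrite mulr_suml.
rewrite exchange_big; apply: eq_bigr => p _.
by under eq_bigr do rewrite mulrBl; rewrite sumrB !sum_delta !mul1r.
Qed.

Lemma level_cim K (S : Defs.coord n) : level S * cim R K S =
  (if in_family G (val S) then 1 else 0) - (if misplaced K (val S) then 1 else 0).
Proof.
rewrite cimE /level /misplaced; have /implyP := @in_family_G_H (val S).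
by case: in_family; case: in_family; case: in_family => //= _;
  rewrite ?mulr1 ?mulr0 ?subr0 ?subrr ?sub0r ?mulN1r.
Qed.

Lemma dot_wt_cim K : dot wt (cim R K) =
  wt_max - M * \sum_(S : Defs.coord n) (if misplaced K (val S) then 1 else 0)
    + step_descent (cim R K).
Proof. by rewrite dot_wt; under eq_bigr do rewrite level_cim; rewrite sumrB mulrBr. Qed.

Lemma step_descent_le K : step_descent (cim R K) <= nsteps.
Proof. by apply: ler_sum => p _; rewrite !cimE; do 2 case: in_family; lra. Qed.

Lemma dot_wt_misplaced_lt K (S0 : Defs.coord n) :
  misplaced K (val S0) -> dot wt (cim R K) < wt_max.
Proof.
move=> misS0; have nsteps_ge0 : 0 <= nsteps by apply: sumr_ge0.
have count_ge1 : 1 <= \sum_(S : Defs.coord n) (if misplaced K (val S) then 1 else 0 : R).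
  by rewrite (bigD1 S0) //= misS0 lerDl; apply: sumr_ge0 => S _; case: misplaced.
have := step_descent_le K; rewrite dot_wt_cim.
have : M <= M * \sum_(S : Defs.coord n) (if misplaced K (val S) then 1 else 0 : R).
  by rewrite -{1}[M]mulr1 ler_wpM2l // addr_ge0.
lra.
Qed.

Lemma dot_wt_sandwiched K : sandwiched K ->
  dot wt (cim R K) = wt_max + step_descent (cim R K).
Proof. by move=> K_sandwiched; rewrite dot_wt_cim big1 ?mulr0 ?subr0 // => S _; rewrite ifN. Qed.

Lemma step_descent_dag_le0 K (p : Defs.coord n * Defs.coord n) :
  is_dag K -> sandwiched K -> steps p -> cim R K p.1 - cim R K p.2 <= 0.
Proof.
move=> dag_K K_sandwiched /(in_family_step dag_K K_sandwiched); rewrite !cimE.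
by do 2 case: in_family => //=; rewrite ?subrr ?sub0r ?subr0 ?oppr_le0 ?ler01 //; lra.
Qed.

Lemma dag_dot_wt_le K : is_dag K -> dot wt (cim R K) <= wt_max.
Proof.
move=> dag_K; have [/existsP[S /dot_wt_misplaced_lt/ltW] // | /existsPn K_sandwiched] :=
  boolP [exists S : Defs.coord n, misplaced K (val S)].
rewrite dot_wt_sandwiched // gerDl; apply: sumr_le0 => p.
exact: step_descent_dag_le0.
Qed.

Lemma dag_step_descent0_invariant K : is_dag K -> sandwiched K ->
  step_descent (cim R K) = 0 -> forall S T, step S T -> in_family K S = in_family K T.
Proof.
move=> dag_K K_sandwiched descent0 S T ST.
have ascent_ge0 p : steps p -> 0 <= cim R K p.2 - cim R K p.1.
  by move=> st; rewrite subr_ge0 -subr_le0 step_descent_dag_le0.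
have ascent0 : \sum_(p | steps p) (cim R K p.2 - cim R K p.1) = 0.
  transitivity (- step_descent (cim R K)); last by rewrite descent0 oppr0.
  by rewrite /step_descent -sumrN; apply: eq_bigr => p _; rewrite opprB.
have /andP[/diffset_card S2 /diffset_card T2] := step_diffsets ST.
have := psumr_eq0P ascent_ge0 ascent0 (ST : steps (exist _ S S2, exist _ T T2)).
rewrite !cimE /=; do 2 case: in_family => //=; rewrite ?subr0 ?sub0r => /eqP;
  by rewrite ?oppr_eq0 oner_eq0.
Qed.

Lemma dag_dot_wt_eq K : is_dag K -> dot wt (cim R K) = wt_max ->
  cim R K =1 cim R G \/ cim R K =1 cim R H.
Proof.
move=> dag_K dot_max.
have [/existsP[S /dot_wt_misplaced_lt] | /existsPn K_sandwiched] :=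
  boolP [exists S : Defs.coord n, misplaced K (val S)]; first by rewrite dot_max ltxx.
have descent0 : step_descent (cim R K) = 0.
  by apply: (addrI wt_max); rewrite addr0 -dot_wt_sandwiched.
have K_step := dag_step_descent0_invariant dag_K K_sandwiched descent0.
have [K_G | K_H] := sandwiched_step_invariant_cases K_sandwiched K_step; [left | right] => S.
  by rewrite !cimE K_G.
by rewrite !cimE K_H.
Qed.

Lemma dot_wt_G : dot wt (cim R G) = wt_max.
Proof.
rewrite dot_wt_sandwiched; last by move=> S; apply: not_misplaced_G.
rewrite /step_descent big1 ?addr0 // => p /step_diffsets/andP[D1 D2].
by rewrite !cimE !(negbTE (diffset_notin_family_G _)) ?subrr.
Qed.

Lemma dot_wt_H : dot wt (cim R H) = wt_max.
Proof.
rewrite dot_wt_sandwiched; last by move=> S; apply: not_misplaced_H.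
rewrite /step_descent big1 ?addr0 // => p /step_diffsets/andP[D1 D2].
by rewrite !cimE !diffset_in_family_H ?subrr.
Qed.

Lemma cim_add_parents_neq : H != G -> exists S : Defs.coord n, cim R G S != cim R H S.
Proof.
move=> H_neq_G; have /subsetPn[_ /imsetP[j jSst ->] jiG] : ~~ ([set (j, i) | j in Sst] \subset G).
  by apply: contra H_neq_G => /setUidPl; rewrite /add_parents => ->.
have D : diffset [set i; j].
  apply/and3P; split; first exact: set21.
    by rewrite subUset !sub1set setU11 !in_setU1 in_setU jSst !orbT.
  by apply/existsP; exists j; rewrite set22 in_setD in_pa jiG.
exists (exist _ [set i; j] (diffset_card D)); rewrite !cimE /= diffset_in_family_H //.
by rewrite (negbTE (diffset_notin_family_G D)) eq_sym oner_eq0.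
Qed.

End Functional.
End AddParents.

Theorem mainTheorem6 (R : realFieldType) (n : nat) (i : 'I_n) (Sst : {set 'I_n})
    (G : digraph n) :
  i \notin Sst ->
  is_dag G ->
  (forall j k, j \in Sst -> k \in Sst -> (j, k) \notin G) ->
  is_dag (add_parents G i Sst) ->
  add_parents G i Sst != G ->
  is_edge (@CIM R n) (cim R G) (cim R (add_parents G i Sst)).
Proof.
move=> i_notin_Sst dag_G Sst_independent dag_H H_neq_G.
apply: (in_conv_edge (w := wt i Sst G R) (c := wt_max i Sst G R)) => //.
- by move=> K; apply: dag_dot_wt_le.
- exact: dot_wt_G.
- exact: dot_wt_H.
- by move=> K; apply: dag_dot_wt_eq.
- exact: cim_add_parents_neq.
Qed.
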